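(* Let $s>0$, $Y>0$ with $\frac sY<\frac13$, let $x_+(\tau)=\frac sYe^{s\tau}$, $\tau^*=\frac1s\ln\left(\frac Y{3s}\right)>0$, and (so that the coexistence equilibrium $E_+=(x_+(\tau),1-x_+(\tau))$ exists) consider $\tau\in[0,\tau^*]$. Define \[ \omega_+(\tau)=\sqrt{\tfrac12\left(-x_+(\tau)^2+\sqrt{x_+(\tau)^4+s^2\left(12x_+(\tau)^2-16x_+(\tau)+4\right)}\right)}, \] \[ h_1(\omega,\tau)=\frac{\omega}{s}\cdot\frac{s+x_+(\tau)-s\,x_+(\tau)-2x_+(\tau)^2-\omega^2}{(1-2x_+(\tau))^2+\omega^2},\qquad h_2(\omega,\tau)=\frac{\omega^2(1+s-x_+(\tau))-(1-2x_+(\tau))s\,x_+(\tau)}{s\left((1-2x_+(\tau))^2+\omega^2\right)}. \] Then: \begin{enumerate} \item For $\tau\in[0,\tau^*]$, $h_1(\omega_+(\tau),\tau)^2+h_2(\omega_+(\tau),\tau)^2=1$. \item $h_1(\omega_+(\tau^* ),\tau^* )=0$, and $h_1(\omega_+(\tau),\tau)>0$ for $0\leq\tau<\tau^*$. \item $h_2(\omega_+(\tau^* ),\tau^* )=-1$, and $-1<h_2(\omega_+(\tau),\tau)<1$ for $0\leq\tau<\tau^*$. \end{enumerate} *)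

From Stdlib Require Import Reals.
Open Scope R_scope.

Definition xplus (s Y tau : R) : R := (s / Y) * exp (s * tau).

Definition tau_star (s Y : R) : R := (1 / s) * ln (Y / (3 * s)).

Definition omega_plus (s Y tau : R) : R :=
  let x := xplus s Y tau in
  sqrt ((1/2) * (- x ^ 2 + sqrt (x ^ 4 + s ^ 2 * (12 * x ^ 2 - 16 * x + 4)))).

Definition h1 (s Y w tau : R) : R :=
  let x := xplus s Y tau in
  (w / s) * ((s + x - s * x - 2 * x ^ 2 - w ^ 2) / ((1 - 2 * x) ^ 2 + w ^ 2)).

Definition h2 (s Y w tau : R) : R :=
  let x := xplus s Y tau in
  (w ^ 2 * (1 + s - x) - (1 - 2 * x) * s * x) / (s * ((1 - 2 * x) ^ 2 + w ^ 2)).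

(* Write x = x_+(tau), which increases from x_+(0) > 0 to 1/3 at tau^*, and
   W = omega_+(tau)^2.  Since x^4 + s^2 (12x^2 - 16x + 4) = (x^2)^2 + 4 s^2 (1-3x)(1-x),
   W is the nonnegative root of W^2 + x^2 W = s^2 (1-3x)(1-x).  Clearing the
   denominators, s^2 ((1-2x)^2 + W)^2 (h1^2 + h2^2 - 1) is a multiple of
   W^2 + x^2 W - s^2 (1-3x)(1-x), hence vanishes.  For x < 1/3 the root satisfies
   W < s(1-x), which makes the numerator of h1 exceed x(1-2x) > 0; then
   h2^2 = 1 - h1^2 < 1.  At tau^* the right-hand side vanishes, so omega_+ = 0. *)

From Stdlib Require Import Reals Lra Psatz.
Open Scope R_scope.

Definition quad_pos_root (a c : R) : R := (- a + sqrt (a ^ 2 + 4 * c)) / 2.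

Lemma quad_pos_root_eq (a c : R) :
  0 <= c -> quad_pos_root a c ^ 2 + a * quad_pos_root a c = c.
Proof.
  intros Hc. unfold quad_pos_root.
  assert (Hr := sqrt_sqrt (a ^ 2 + 4 * c) ltac:(nra)).
  nra.
Qed.

Lemma lt_sqrt_sq_add_pos (a c : R) : 0 < c -> a < sqrt (a ^ 2 + 4 * c).
Proof.
  intros Hc.
  assert (Hr := sqrt_sqrt (a ^ 2 + 4 * c) ltac:(nra)).
  assert (Hr0 := sqrt_pos (a ^ 2 + 4 * c)).
  nra.
Qed.

Lemma quad_pos_root_ge0 (a c : R) : 0 <= c -> 0 <= quad_pos_root a c.
Proof.
  intros Hc. unfold quad_pos_root.
  destruct (Rle_lt_or_eq_dec _ _ Hc) as [Hc' | <-].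
  - assert (H := lt_sqrt_sq_add_pos a c Hc'). lra.
  - replace (a ^ 2 + 4 * 0) with (Rsqr a) by (unfold Rsqr; ring).
    rewrite sqrt_Rsqr_abs. assert (H := Rle_abs a). lra.
Qed.

Lemma quad_pos_root_gt0 (a c : R) : 0 < c -> 0 < quad_pos_root a c.
Proof. intros Hc. unfold quad_pos_root. assert (H := lt_sqrt_sq_add_pos a c Hc). lra. Qed.

Lemma quad_root_lt (a c V B : R) :
  0 <= a -> 0 <= V -> V ^ 2 + a * V = c -> 0 <= B -> c < B ^ 2 + a * B -> V < B.
Proof. intros. nra. Qed.

Definition crossing_const (s x : R) : R := s ^ 2 * (1 - 3 * x) * (1 - x).

Definition omega (s x : R) : R := sqrt (quad_pos_root (x ^ 2) (crossing_const s x)).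

Lemma omega_plus_omega (s Y tau : R) : omega_plus s Y tau = omega s (xplus s Y tau).
Proof.
  unfold omega_plus, omega, quad_pos_root, crossing_const.
  set (x := xplus s Y tau).
  replace (x ^ 4 + s ^ 2 * (12 * x ^ 2 - 16 * x + 4))
    with ((x ^ 2) ^ 2 + 4 * (s ^ 2 * (1 - 3 * x) * (1 - x))) by ring.
  f_equal. field.
Qed.

Lemma crossing_const_ge0 (s x : R) : x <= 1 / 3 -> 0 <= crossing_const s x.
Proof.
  intros Hx. unfold crossing_const.
  apply Rmult_le_pos; [apply Rmult_le_pos|]; nra.
Qed.

Lemma omega_root (s x : R) :
  x <= 1 / 3 -> (omega s x ^ 2) ^ 2 + x ^ 2 * omega s x ^ 2 = crossing_const s x.
Proof.
  intros Hx. unfold omega.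
  assert (Hc := crossing_const_ge0 s x Hx).
  rewrite !pow2_sqrt by exact (quad_pos_root_ge0 _ _ Hc).
  exact (quad_pos_root_eq _ _ Hc).
Qed.

Lemma omega_gt0 (s x : R) : 0 < s -> x < 1 / 3 -> 0 < omega s x.
Proof.
  intros Hs Hx. unfold omega. apply sqrt_lt_R0, quad_pos_root_gt0.
  unfold crossing_const. apply Rmult_lt_0_compat; [apply Rmult_lt_0_compat|]; nra.
Qed.

Lemma omega_one_third (s : R) : omega s (1 / 3) = 0.
Proof.
  unfold omega, quad_pos_root, crossing_const.
  replace (((1 / 3) ^ 2) ^ 2 + 4 * (s ^ 2 * (1 - 3 * (1 / 3)) * (1 - 1 / 3)))
    with (Rsqr ((1 / 3) ^ 2)) by (unfold Rsqr; field).
  rewrite sqrt_Rsqr by nra.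
  replace ((- (1 / 3) ^ 2 + (1 / 3) ^ 2) / 2) with 0 by field.
  exact sqrt_0.
Qed.

Definition h1x (s x w : R) : R :=
  (w / s) * ((s + x - s * x - 2 * x ^ 2 - w ^ 2) / ((1 - 2 * x) ^ 2 + w ^ 2)).

Definition h2x (s x w : R) : R :=
  (w ^ 2 * (1 + s - x) - (1 - 2 * x) * s * x) / (s * ((1 - 2 * x) ^ 2 + w ^ 2)).

Lemma h1x_h2x_sq (s x w : R) :
  s <> 0 -> (1 - 2 * x) ^ 2 + w ^ 2 <> 0 ->
  (w ^ 2) ^ 2 + x ^ 2 * w ^ 2 = crossing_const s x ->
  h1x s x w ^ 2 + h2x s x w ^ 2 = 1.
Proof.
  intros Hs HD Hroot. unfold h1x, h2x.
  field_simplify_eq; [|split; assumption].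
  apply Rminus_diag_uniq.
  set (W := w ^ 2) in *.
  transitivity ((W + (- 2 * (s + x - s * x - 2 * x ^ 2) + (1 + s - x) ^ 2 - s ^ 2 - x ^ 2))
                * (W ^ 2 + x ^ 2 * W - crossing_const s x)).
  - unfold W, crossing_const. ring.
  - rewrite Hroot. ring.
Qed.

Lemma h1x_gt0 (s x w : R) :
  0 < s -> 0 < x < 1 / 3 -> 0 < w ->
  (w ^ 2) ^ 2 + x ^ 2 * w ^ 2 = crossing_const s x -> 0 < h1x s x w.
Proof.
  intros Hs Hx Hw Hroot.
  assert (HW : w ^ 2 < s * (1 - x)).
  { apply (quad_root_lt (x ^ 2) (crossing_const s x)); [nra | nra | exact Hroot | nra |].
    unfold crossing_const.
    assert (0 < s * (1 - x) * (2 * s * x + x ^ 2)) by (apply Rmult_lt_0_compat; nra).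
    nra. }
  unfold h1x. apply Rmult_lt_0_compat; apply Rdiv_lt_0_compat; nra.
Qed.

Lemma h1x_h2x_one_third (s : R) : s <> 0 -> h1x s (1 / 3) 0 = 0 /\ h2x s (1 / 3) 0 = -1.
Proof. intros Hs. unfold h1x, h2x. split; field; assumption. Qed.

Lemma xplus_tau_star (s Y : R) : 0 < s -> 0 < Y -> xplus s Y (tau_star s Y) = 1 / 3.
Proof.
  intros Hs HY. unfold xplus, tau_star.
  replace (s * (1 / s * ln (Y / (3 * s)))) with (ln (Y / (3 * s))) by (field; lra).
  rewrite exp_ln by (apply Rdiv_lt_0_compat; lra).
  field. lra.
Qed.

Lemma xplus_gt0 (s Y tau : R) : 0 < s -> 0 < Y -> 0 < xplus s Y tau.
Proof.
  intros Hs HY. unfold xplus.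
  apply Rmult_lt_0_compat; [apply Rdiv_lt_0_compat; lra | apply exp_pos].
Qed.

Lemma xplus_lt (s Y t1 t2 : R) : 0 < s -> 0 < Y -> t1 < t2 -> xplus s Y t1 < xplus s Y t2.
Proof.
  intros Hs HY Ht. unfold xplus.
  apply Rmult_lt_compat_l; [apply Rdiv_lt_0_compat; lra|].
  apply exp_increasing. nra.
Qed.

Lemma xplus_le_one_third (s Y tau : R) :
  0 < s -> 0 < Y -> tau <= tau_star s Y -> xplus s Y tau <= 1 / 3.
Proof.
  intros Hs HY Htau. rewrite <- (xplus_tau_star s Y Hs HY).
  destruct (Rle_lt_or_eq_dec _ _ Htau) as [Hlt | ->]; [|right; reflexivity].
  left. exact (xplus_lt s Y _ _ Hs HY Hlt).
Qed.

Lemma xplus_lt_one_third (s Y tau : R) :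
  0 < s -> 0 < Y -> tau < tau_star s Y -> xplus s Y tau < 1 / 3.
Proof.
  intros Hs HY Htau. rewrite <- (xplus_tau_star s Y Hs HY).
  exact (xplus_lt s Y _ _ Hs HY Htau).
Qed.

Lemma h1_omega_plus (s Y tau : R) :
  h1 s Y (omega_plus s Y tau) tau = h1x s (xplus s Y tau) (omega s (xplus s Y tau)).
Proof. rewrite omega_plus_omega. reflexivity. Qed.

Lemma h2_omega_plus (s Y tau : R) :
  h2 s Y (omega_plus s Y tau) tau = h2x s (xplus s Y tau) (omega s (xplus s Y tau)).
Proof. rewrite omega_plus_omega. reflexivity. Qed.

Theorem lemmaA1 (s Y : R) (hs : 0 < s) (hY : 0 < Y) (hsY : s / Y < 1 / 3) :
  (forall tau : R, 0 <= tau <= tau_star s Y ->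
     h1 s Y (omega_plus s Y tau) tau ^ 2 + h2 s Y (omega_plus s Y tau) tau ^ 2 = 1) /\
  (h1 s Y (omega_plus s Y (tau_star s Y)) (tau_star s Y) = 0 /\
   forall tau : R, 0 <= tau < tau_star s Y -> 0 < h1 s Y (omega_plus s Y tau) tau) /\
  (h2 s Y (omega_plus s Y (tau_star s Y)) (tau_star s Y) = -1 /\
   forall tau : R, 0 <= tau < tau_star s Y ->
     -1 < h2 s Y (omega_plus s Y tau) tau < 1).
Proof.
  (* [hsY] only says that [tau_star s Y > 0]. *)
  assert (Hsq : forall tau, tau <= tau_star s Y ->
            h1 s Y (omega_plus s Y tau) tau ^ 2 + h2 s Y (omega_plus s Y tau) tau ^ 2 = 1).
  { intros tau Htau. rewrite h1_omega_plus, h2_omega_plus.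
    assert (Hx := xplus_gt0 s Y tau hs hY).
    assert (Hx3 := xplus_le_one_third s Y tau hs hY Htau).
    apply h1x_h2x_sq; [lra | nra | apply omega_root; lra]. }
  assert (Hpos : forall tau, tau < tau_star s Y -> 0 < h1 s Y (omega_plus s Y tau) tau).
  { intros tau Htau. rewrite h1_omega_plus.
    assert (Hx := xplus_gt0 s Y tau hs hY).
    assert (Hx3 := xplus_lt_one_third s Y tau hs hY Htau).
    apply h1x_gt0; [lra | lra | apply omega_gt0; lra | apply omega_root; lra]. }
  rewrite h1_omega_plus, h2_omega_plus, (xplus_tau_star s Y hs hY), omega_one_third.
  destruct (h1x_h2x_one_third s ltac:(lra)) as [-> ->].
  split; [intros tau Htau; apply Hsq; lra|].
  split; split; [reflexivity | intros tau Htau; apply Hpos; lra | reflexivity |].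
  intros tau Htau.
  assert (H1 := Hpos tau ltac:(lra)). assert (H12 := Hsq tau ltac:(lra)).
  nra.
Qed.
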